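(* Let $G$ and $H$ be finite simple graphs, let $n_2$ be the order of $H$, and let $u\in V(G)$, $v\in V(H)$. Then \[\mathrm{dp}_{G[H]}((u,v))=\big(\mathrm{dp}_G(u)\big)^{\curlywedge\times n_2}\,\mathrm{dp}(H)+x^{(\deg_G u)\,n_2}\,\mathrm{dp}_H(v).\]
   Context: For a vertex $w$ of a simple graph $\Gamma$, the degree polynomial $\mathrm{dp}_\Gamma(w)\in\mathbb{Z}[x]$ is the polynomial in which the coefficient of $x^{i}$ is the number of neighbors of $w$ in $\Gamma$ having degree $i$ in $\Gamma$ ($\mathrm{dp}_\Gamma(w)=0$ if $w$ is isolated). The degree polynomial of the graph $\Gamma$ is $\mathrm{dp}(\Gamma)=\sum_{i\ge0} t_i x^i$, where $t_i$ is the number of vertices of $\Gamma$ of degree $i$. For a polynomial $f=\sum_i a_i x^i$ with nonnegative integer coefficients and $n\in\mathbb{N}$, $f^{\curlywedge\times n}=\sum_i a_i x^{in}$ (and $0^{\curlywedge\times n}=0$). The lexicographic product $G[H]$ is the simple graph on $V(G)\times V(H)$ in which $(u_1,v_1)\sim(u_2,v_2)$ if and only if either $u_1\sim u_2$ in $G$, or $u_1=u_2$ and $v_1\sim v_2$ in $H$. *)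

From mathcomp Require Import all_boot all_order all_algebra.
Set Implicit Arguments. Unset Strict Implicit. Unset Printing Implicit Defensive.
Import GRing.Theory.
Local Open Scope ring_scope.

Definition simple_graph (T : finType) (e : rel T) : Prop :=
  symmetric e /\ irreflexive e.

Definition deg (T : finType) (e : rel T) (w : T) : nat := #|[set y | e w y]|.

Definition dpv (T : finType) (e : rel T) (w : T) : {poly int} :=
  \sum_(y : T | e w y) 'X^(deg e y).

Definition dpg (T : finType) (e : rel T) : {poly int} :=
  \sum_(y : T) 'X^(deg e y).

Definition stretch (f : {poly int}) (n : nat) : {poly int} :=
  \sum_(i < size f) f`_i *: 'X^(i * n).

Definition lexprod (T1 T2 : finType) (e1 : rel T1) (e2 : rel T2) : rel (T1 * T2) :=
  fun p q => e1 p.1 q.1 || ((p.1 == q.1) && e2 p.2 q.2).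

From mathcomp Require Import all_boot all_order all_algebra.
Local Open Scope ring_scope.
Import GRing.Theory.
Set Implicit Arguments.
Unset Strict Implicit.

(* The neighbourhood of (u, v) in G[H] is the union of N_G(u) x V(H) and
   {u} x N_H(v), disjoint because G has no loops.  Summing over it splits the
   degree of (u, v) as deg_G u * |V(H)| + deg_H v, and hence dp_{G[H]}(u, v)
   into the stretched dp_G(u) times dp(H) plus the shifted dp_H(v). *)

Lemma stretchE (f : {poly int}) (n : nat) : stretch f n = f \Po 'X^n.
Proof. by rewrite comp_polyE; apply: eq_bigr => i _; rewrite -exprM mulnC. Qed.

Lemma stretch_sumXn (I : finType) (P : pred I) (k : I -> nat) (n : nat) :
  stretch (\sum_(i | P i) 'X^(k i)) n = \sum_(i | P i) 'X^(k i * n).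
Proof.
rewrite stretchE (big_morph (fun p => p \Po 'X^n) (fun p q => comp_polyD p q _) (comp_poly0 _)).
by apply: eq_bigr => i _; rewrite comp_Xn_poly -exprM mulnC.
Qed.

Lemma deg_sum1 (T : finType) (e : rel T) (w : T) : deg e w = (\sum_(y | e w y) 1)%N.
Proof. by rewrite /deg cardsE sum1_card. Qed.

Section LexprodNeighbourhood.

Variables (T1 T2 : finType) (e1 : rel T1) (e2 : rel T2).
Hypothesis e1_irr : irreflexive e1.

Lemma big_lexprod_nbhd (R : Type) (idx : R) (op : Monoid.com_law idx)
    (u : T1) (v : T2) (F : T1 * T2 -> R) :
  \big[op/idx]_(p | lexprod e1 e2 (u, v) p) F p =
  op (\big[op/idx]_(c | e1 u c) \big[op/idx]_(d : T2) F (c, d))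
     (\big[op/idx]_(d | e2 v d) F (u, d)).
Proof.
rewrite (bigID (fun p => e1 u p.1)) /= pair_big_dep.
rewrite -(big_pred1_eq op u (fun c => \big[op/idx]_(d | e2 v d) F (c, d))) pair_big_dep.
congr (op _ _); apply: eq_big => [[c d]|[] //] /=; rewrite /lexprod /=.
  by rewrite andbT; case: (e1 u c); rewrite ?andbF.
rewrite eq_sym; case: eqP => [->|_]; first by rewrite e1_irr andbT.
by rewrite orbF andbN.
Qed.

Lemma deg_lexprod (u : T1) (v : T2) :
  deg (lexprod e1 e2) (u, v) = (deg e1 u * #|T2| + deg e2 v)%N.
Proof.
rewrite !deg_sum1 big_lexprod_nbhd big_distrl /=.
by congr (_ + _)%N; apply: eq_bigr => c _; rewrite sum1_card mul1n.
Qed.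

End LexprodNeighbourhood.

Theorem theorem4p18 (T1 T2 : finType) (e1 : rel T1) (e2 : rel T2)
  (hG : simple_graph e1) (hH : simple_graph e2) (u : T1) (v : T2) :
  dpv (lexprod e1 e2) (u, v) =
  stretch (dpv e1 u) #|T2| * dpg e2 + 'X^(deg e1 u * #|T2|) * dpv e2 v.
Proof.
have e1_irr : irreflexive e1 := hG.2.
rewrite /dpv (big_lexprod_nbhd e2 e1_irr) stretch_sumXn /dpg big_distrlr big_distrr /=.
congr (_ + _); last by apply: eq_bigr => d _; rewrite deg_lexprod // exprD.
by apply: eq_bigr => c _; apply: eq_bigr => d _; rewrite deg_lexprod // exprD.
Qed.
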